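(* Let $F$ be a field, $d\ge1$, and $x:\mathbb Z^2\to F$ such that $\det M^{(d+1)}_{j,k}=1$ and $\det M^{(d)}_{j,k}\neq0$ for all $j,k\in\mathbb Z$. Then there exist functions $d_1,\dots,d_d:\mathbb Z\to F$ such that for all $j,k\in\mathbb Z$, $$0=x_{j,k-d}+\sum_{i=1}^d(-1)^i\,d_i(j-k)\,x_{j-i,k+i-d}-(-1)^d\,x_{j-d-1,k+1}.$$ That is, the coefficients of this linear recursion depend only on $j-k$ and not on $j+k$.
   Context: For $m\ge1$, $M^{(m)}_{j,k}$ denotes the $m\times m$ matrix whose $(r,c)$ entry ($0\le r,c\le m-1$) is $x_{j-r+c,\;k-(m-1)+r+c}$. *)

From HB Require Import structures.
From mathcomp Require Import all_boot all_order all_algebra.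
Set Implicit Arguments. Unset Strict Implicit. Unset Printing Implicit Defensive.
Import Order.TTheory GRing.Theory Num.Theory.
Local Open Scope ring_scope.

Definition Mmat (F : fieldType) (x : int -> int -> F) (m : nat) (j k : int)
  : 'M[F]_m :=
  \matrix_(r < m, c < m)
     x (j - (nat_of_ord r)%:Z + (nat_of_ord c)%:Z)
       (k - (m.-1)%:Z + (nat_of_ord r)%:Z + (nat_of_ord c)%:Z).

From HB Require Import structures.
From mathcomp Require Import all_boot all_order all_algebra.
From mathcomp Require Import zify.
Import Order.TTheory GRing.Theory Num.Theory.
Local Open Scope ring_scope.
Set Implicit Arguments. Unset Strict Implicit.

(* Fix t = j - k and read x along anti-diagonals: Y_r(s) := x_{s-r, s-t-d+r} for
   r = 0, ..., d+1.  The hypotheses say that the (d+1) x (d+1) windows of consecutive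
   positions of Y_0..Y_d and of Y_1..Y_{d+1} have determinant 1, and that the d x d
   windows of Y_1..Y_d are invertible.  Expressing the next position of a unimodular
   window through the previous ones gives a coefficient vector whose leading entry is
   forced to be (-1)^d, since the window moves by a shift matrix of determinant
   (-1)^d a_0.  The two windows thus give coefficient vectors agreeing in the leading
   entry, and the invertible inner window forces them to agree everywhere; hence the
   next row of the (d+1) x (d+2) strip of all d+2 sequences lies in its row space.
   All strips have rank d+1, so they share one row space, and a single cofactor
   vector annihilates every strip: this is the recursion, with coefficients that
   depend on t only. *)

Section ShiftUp.
Variables (R : comNzRingType) (n : nat).

Definition shiftup_mx (a : 'rV[R]_n.+1) : 'M[R]_n.+1 :=
  \matrix_(i, j) if (i < n)%N then ((j : nat) == i.+1)%:R else a 0 j.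

Lemma det_shiftup_mx a : \det (shiftup_mx a) = (-1) ^+ n * a 0 0.
Proof.
rewrite (expand_det_col _ 0) (bigD1 ord_max) //= big1 ?addr0 => [|i /negPf ne].
  rewrite mxE ltnn /cofactor addn0 mulrC; congr (_ * _).
  rewrite -[RHS]mulr1 -(det1 R n); congr (_ * \det _); apply/matrixP => i j.
  have lift_max_widen : lift ord_max i = widen_ord (leqnSn n) i.
    by apply: val_inj; rewrite /= /bump leqNgt ltn_ord.
  by rewrite !mxE lift_max_widen /= ltn_ord eqSS eq_sym.
have lt_in : (i < n)%N by move: (ltn_ord i) ne; rewrite -val_eqE /=; lia.
by rewrite mxE lt_in mul0r.
Qed.
End ShiftUp.

Section Windows.
Variables (F : fieldType) (Y : nat -> int -> F).

Definition window (i0 m : nat) (q : int) : 'M[F]_m :=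
  \matrix_(i < m, r < m) Y (i0 + r)%N (q + (i : nat)%:Z).

Definition next_row (i0 m : nat) (q : int) : 'rV[F]_m :=
  \row_(r < m) Y (i0 + r)%N (q + m%:Z).

Lemma shiftup_window n i0 q (a : 'rV_n.+1) :
  a *m window i0 n.+1 q = next_row i0 n.+1 q ->
  shiftup_mx a *m window i0 n.+1 q = window i0 n.+1 (q + 1).
Proof.
move=> /matrixP next_a; apply/matrixP => i r; rewrite !mxE.
under eq_bigr => j _ do rewrite !mxE.
case: (ltnP i n) => [lt_in | le_ni]; last first.
  have -> : q + 1 + (i : nat)%:Z = q + (n.+1)%:Z by move: (ltn_ord i) le_ni; lia.
  have := next_a 0 r; rewrite !mxE => <-.
  by apply: eq_bigr => j _; rewrite mxE.
rewrite (bigD1 (Ordinal (lt_in : (i.+1 < n.+1)%N))) //= big1 => [|j ne_ji].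
  by rewrite eqxx mul1r addr0; congr (Y _ _); lia.
rewrite (_ : (j : nat) == i.+1 = false) ?mul0r //.
by apply: contraNF ne_ji => /eqP ji; rewrite -val_eqE /= ji.
Qed.

Lemma next_row_coef n i0 q : window i0 n.+1 q \in unitmx ->
  exists2 a : 'rV_n.+1, a *m window i0 n.+1 q = next_row i0 n.+1 q
    & (-1) ^+ n * a 0 0 * \det (window i0 n.+1 q) = \det (window i0 n.+1 (q + 1)).
Proof.
move=> unitW; set a := next_row i0 n.+1 q *m invmx (window i0 n.+1 q).
have next_a : a *m window i0 n.+1 q = next_row i0 n.+1 q by rewrite mulmxKV.
exists a => //.
by rewrite -(shiftup_window next_a) det_mulmx det_shiftup_mx.
Qed.

Lemma next_row_coef_unimodular n i0 q :
  \det (window i0 n.+1 q) = 1 -> \det (window i0 n.+1 (q + 1)) = 1 ->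
  exists2 a : 'rV_n.+1, a *m window i0 n.+1 q = next_row i0 n.+1 q & a 0 0 = (-1) ^+ n.
Proof.
move=> detW detW1; have unitW : window i0 n.+1 q \in unitmx by rewrite unitmxE detW unitr1.
have [a next_a] := next_row_coef unitW; rewrite detW detW1 mulr1 => head_a.
by exists a; rewrite // -[a 0 0](signrMK n) head_a mulr1.
Qed.

Section Strip.
Variable d : nat.
Hypothesis det_window0 : forall q, \det (window 0 d.+1 q) = 1.
Hypothesis det_window1 : forall q, \det (window 1 d.+1 q) = 1.
Hypothesis det_window_inner : forall q, \det (window 1 d q) != 0.

Definition strip (q : int) : 'M[F]_(d.+1, d.+2) :=
  \matrix_(i < d.+1, r < d.+2) Y r (q + (i : nat)%:Z).

Lemma next_row_in_strip q :
  exists g : 'rV_d.+1, g *m strip q = \row_r Y r (q + (d.+1)%:Z).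
Proof.
have [aT /matrixP nextT headT] :=
  next_row_coef_unimodular (det_window0 q) (det_window0 (q + 1)).
have [aB /matrixP nextB headB] :=
  next_row_coef_unimodular (det_window1 q) (det_window1 (q + 1)).
set delta := \row_(i < d) (aT - aB) 0 (lift ord0 i).
have delta0 : delta *m window 1 d (q + 1) = 0.
  apply/rowP => r; rewrite !mxE.
  have eT : \sum_i aT 0 i * Y r.+1 (q + (i : nat)%:Z) = Y r.+1 (q + (d.+1)%:Z).
    have := nextT 0 (lift ord0 r); rewrite !mxE lift0 => <-.
    by apply: eq_bigr => i _; rewrite mxE.
  have eB : \sum_i aB 0 i * Y r.+1 (q + (i : nat)%:Z) = Y r.+1 (q + (d.+1)%:Z).
    have := nextB 0 (widen_ord (leqnSn d) r); rewrite !mxE => <-.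
    by apply: eq_bigr => i _; rewrite mxE.
  have : \sum_i (aT - aB) 0 i * Y r.+1 (q + (i : nat)%:Z) = 0.
    under eq_bigr => i _ do rewrite !mxE mulrBl.
    by rewrite sumrB eT eB subrr.
  rewrite big_ord_recl !mxE headT headB subrr mul0r add0r => sum0.
  apply: eq_trans sum0; apply: eq_bigr => i _.
  by rewrite !mxE add1n lift0; congr (_ * Y _ _); lia.
have unit_inner : window 1 d (q + 1) \in unitmx by rewrite unitmxE unitfE.
have eq_aTB : aT = aB.
  apply/rowP => k; apply/eqP; rewrite -subr_eq0; apply/eqP.
  have delta_eq0 : delta = 0 by rewrite -(mulmxK unit_inner delta) delta0 mul0mx.
  case: (unliftP ord0 k) => [j ->| ->]; last by rewrite headT headB subrr.
  by have /rowP/(_ j) := delta_eq0; rewrite !mxE.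
exists aT; apply/rowP => r; rewrite !mxE.
case: (unliftP ord0 r) => [j ->| ->].
  have := nextB 0 j; rewrite -eq_aTB !mxE add1n lift0 => <-.
  by apply: eq_bigr => i _; rewrite !mxE.
have := nextT 0 ord0; rewrite !mxE => <-.
by apply: eq_bigr => i _; rewrite !mxE.
Qed.

Lemma strip_succ_sub q : (strip (q + 1) <= strip q)%MS.
Proof.
apply/row_subP => i; case: (ltnP i d) => [lt_id | le_di].
  have -> : row i (strip (q + 1)) = row (Ordinal (lt_id : (i.+1 < d.+1)%N)) (strip q).
    by apply/rowP => r; rewrite !mxE /=; congr (Y _ _); lia.
  exact: row_sub.
have [g next_g] := next_row_in_strip q.
have -> : row i (strip (q + 1)) = g *m strip q.
  rewrite next_g; apply/rowP => r; rewrite !mxE.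
  by congr (Y _ _); move: (ltn_ord i) le_di; lia.
exact: submxMl.
Qed.

Lemma rank_strip q : \rank (strip q) = d.+1.
Proof.
have unitW : window 0 d.+1 q \in unitmx by rewrite unitmxE det_window0 unitr1.
apply/eqP; rewrite eqn_leq rank_leq_row -{1}(mxrank_unit unitW).
have -> : window 0 d.+1 q = colsub (widen_ord (leqnSn d.+1)) (strip q).
  by apply/matrixP => i r; rewrite !mxE.
by rewrite -{1}[strip q]mulmx1 -mulmx_colsub mxrankM_maxl.
Qed.

Lemma strip_succ q : (strip (q + 1) :=: strip q)%MS.
Proof.
by apply/eqmxP; rewrite -(mxrank_leqif_eq (strip_succ_sub q)).2 !rank_strip.
Qed.

Lemma strip_eqmx0 s : (strip s :=: strip 0)%MS.
Proof.
have shift q n : (strip (q + n%:Z) :=: strip q)%MS.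
  elim: n => [|n IH]; first by rewrite addr0.
  have -> : q + (n.+1)%:Z = q + n%:Z + 1 by lia.
  exact: eqmx_trans (strip_succ _) IH.
case: s => n; first by rewrite -[Posz n]add0r; apply: shift.
by rewrite NegzE; apply: eqmx_sym; have := shift (- (n.+1)%:Z) n.+1; rewrite addNr.
Qed.

(* By [A *m \adj A = \det A %:M], the last column of the adjugate of [strip 0]
   bordered by a zero row is orthogonal to every row of [strip 0]. *)
Definition strip0_border : 'M[F]_d.+2 :=
  \matrix_(i, r) if (i < d.+1)%N then Y r (i : nat)%:Z else 0.

Definition strip_ker : 'cV[F]_d.+2 := col ord_max (\adj strip0_border).

Lemma mul_strip0_ker : strip 0 *m strip_ker = 0.
Proof.
apply/colP => i; rewrite !mxE.
have /matrixP/(_ (widen_ord (leqnSn _) i) ord_max) := mul_mx_adj strip0_border.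
rewrite !mxE -val_eqE /= ltn_eqF // mulr0n => adj_row.
by apply: eq_trans adj_row; apply: eq_bigr => r _; rewrite !mxE /= ltn_ord add0r.
Qed.

Lemma strip_ker_last : strip_ker ord_max 0 = 1.
Proof.
rewrite !mxE /cofactor addnn -signr_odd odd_double expr0 mul1r -(det_window0 0).
by congr (\det _); apply/matrixP => i r; rewrite !mxE !lift_max ltn_ord add0r.
Qed.

Lemma strip_ker_first : strip_ker 0 0 = (-1) ^+ d.+1.
Proof.
rewrite !mxE /cofactor addn0 -[RHS]mulr1 -(det_window1 0).
by congr (_ * \det _); apply/matrixP => i r; rewrite !mxE lift_max lift0 ltn_ord add0r.
Qed.

Lemma mul_strip_ker s : strip s *m strip_ker = 0.
Proof.
have /submxP[D ->] : (strip s <= strip 0)%MS by rewrite strip_eqmx0.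
by rewrite -mulmxA mul_strip0_ker mulmx0.
Qed.

Definition rec_coef (i : nat) : F := (-1) ^+ d.+1 * strip_ker (inord i) 0.

Lemma strip_recurrence s :
  Y 0 s + \sum_(1 <= i < d.+1) rec_coef i * Y i s - (-1) ^+ d * Y d.+1 s = 0.
Proof.
have lift0_max : lift ord0 ord_max = ord_max :> 'I_d.+2 by apply: val_inj.
transitivity ((-1) ^+ d.+1 * (strip s *m strip_ker) 0 0); last first.
  by rewrite mul_strip_ker mxE mulr0.
rewrite mxE big_ord_recl big_ord_recr /= lift0_max strip_ker_first strip_ker_last.
rewrite !mulrDr addrA; congr (_ + _ + _).
    by rewrite mxE addr0 [_ * (-1) ^+ _]mulrC signrMK.
  rewrite big_add1 /= big_mkord mulr_sumr; apply: eq_bigr => i _; rewrite /rec_coef.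
  have -> : inord i.+1 = lift ord0 (widen_ord (leqnSn d) i) :> 'I_d.+2.
    by apply: val_inj; rewrite /= inordK /bump ?leq0n // !ltnS ltnW.
  rewrite mxE -mulrA; congr (_ * _); rewrite mulrC; congr (_ * _).
  by rewrite mxE lift0 /= addr0.
by rewrite mxE addr0 mulr1 exprS mulN1r mulNr.
Qed.
End Strip.
End Windows.

(* With e = j - k + d, position s = j of sequence r is the entry x_{j-r, k+r-d}. *)
Definition diag_seq (F : fieldType) (x : int -> int -> F) (e : int) (r : nat) (s : int) : F :=
  x (s - r%:Z) (s - e + r%:Z).

Lemma window_diag_seq (F : fieldType) (x : int -> int -> F) e i0 m q :
  window (diag_seq x e) i0 m q = (Mmat x m (q - i0%:Z) (q - e + i0%:Z + (m.-1)%:Z))^T.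
Proof. by apply/matrixP => i r; rewrite !mxE; congr (x _ _); lia. Qed.

Theorem mainTheorem7 (F : fieldType) (d : nat) (hd : (1 <= d)%N)
  (x : int -> int -> F)
  (h1 : forall j k : int, \det (Mmat x d.+1 j k) = 1)
  (h2 : forall j k : int, \det (Mmat x d j k) != 0) :
  exists D : nat -> int -> F,
    forall j k : int,
      0 = x j (k - d%:Z)
          + \sum_(1 <= i < d.+1) (-1) ^+ i * D i (j - k)
                * x (j - i%:Z) (k + i%:Z - d%:Z)
          - (-1) ^+ d * x (j - d%:Z - 1) (k + 1).
Proof.
exists (fun i t => (-1) ^+ i * rec_coef (diag_seq x (t + d%:Z)) d i) => j k.
set Y := diag_seq x (j - k + d%:Z).
have det_window0 q : \det (window Y 0 d.+1 q) = 1 by rewrite window_diag_seq det_tr h1.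
have det_window1 q : \det (window Y 1 d.+1 q) = 1 by rewrite window_diag_seq det_tr h1.
have det_inner q : \det (window Y 1 d q) != 0 by rewrite window_diag_seq det_tr h2.
rewrite -[LHS](strip_recurrence det_window0 det_window1 det_inner j).
congr (_ + _ - _ * _).
    by rewrite /Y /diag_seq; congr (x _ _); lia.
  apply: eq_big_nat => i _; rewrite signrMK.
  by rewrite /Y /diag_seq; congr (_ * x _ _); lia.
by rewrite /Y /diag_seq; congr (x _ _); lia.
Qed.
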